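(* Let $G$ be a convergence group and $\tau(G)$ its locally quasi-convex modification. Then $\Gamma G$ and $\Gamma\tau(G)$ have the same equicontinuous subsets. That is, a set $H$ of characters is an equicontinuous subset of $\Gamma G$ if and only if it is an equicontinuous subset of $\Gamma\tau(G)$.
   Context: All groups are abelian. A convergence group is an abelian group with a convergence structure (an assignment to each point $x$ of a collection of filters converging to $x$). This assignment must satisfy three conditions: point ultrafilters converge to their point; finite intersections of filters converging to $x$ converge to $x$; and finer filters converge. The group operation must be compatible: $\mathcal F\to x$, $\mathcal G\to y$ imply $\mathcal F-\mathcal G\to x-y$. Topological groups are convergence groups. $\mathbb T=\mathbb R/\mathbb Z$, $\mathbb T_+=\rho([-1/4,1/4])$ where $\rho:\mathbb R\to\mathbb T$ is the quotient map. $\Gamma G$ is the group of continuous homomorphisms $G\to\mathbb T$. A set $M\subseteq\Gamma G$ is equicontinuous if for every filter $\mathcal F\to0$ in $G$, the filter generated by $\{\varphi(x):\varphi\in M,x\in F\}$, $F\in\mathcal F$, converges to $0$ in $\mathbb T$. A subset $A$ of a topological group $G$ is quasi-convex if for every $x\notin A$ there is a continuous character $\varphi$ with $\varphi(A)\subseteq\mathbb T_+$ and $\varphi(x)\notin\mathbb T_+$. A topological group is locally quasi-convex if it has a zero neighbourhood base of quasi-convex sets. The locally quasi-convex modification $\tau(G)$ of a convergence group $G$ is the finest locally quasi-convex group topology on $G$ coarser than the convergence structure of $G$, i.e. such that the identity $G\to\tau(G)$ is continuous. *)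

From Stdlib Require Import Reals.
Open Scope R_scope.

Set Implicit Arguments.

Record AbGroup := {
  carrier :> Type;
  g0 : carrier;
  gadd : carrier -> carrier -> carrier;
  gopp : carrier -> carrier;
  gaddA : forall x y z, gadd x (gadd y z) = gadd (gadd x y) z;
  gaddC : forall x y, gadd x y = gadd y x;
  gadd0 : forall x, gadd g0 x = x;
  gaddN : forall x, gadd (gopp x) x = g0
}.

Definition gsub (G : AbGroup) (x y : G) : G := gadd G x (gopp G y).

Definition set (X : Type) := X -> Prop.

Definition is_filter (X : Type) (F : set (set X)) : Prop :=
  F (fun _ => True) /\
  ~ F (fun _ => False) /\
  (forall A B : set X, F A -> F B -> F (fun x => A x /\ B x)) /\
  (forall A B : set X, (forall x, A x -> B x) -> F A -> F B).

Definition point_filter (X : Type) (x : X) : set (set X) := fun A => A x.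

Definition filter_cap (X : Type) (F H : set (set X)) : set (set X) :=
  fun A => F A /\ H A.

Definition filter_sub {G : AbGroup} (F H : set (set G)) : set (set G) :=
  fun C => exists A B, F A /\ H B /\
     (forall a b, A a -> B b -> C (gsub G a b)).

Definition convergence (G : AbGroup) := set (set G) -> G -> Prop.

Definition is_convergence_group {G : AbGroup} (conv : convergence G) : Prop :=
  (forall x : G, conv (point_filter x) x) /\
  (forall (F H : set (set G)) (x : G), is_filter F -> is_filter H ->
      conv F x -> conv H x -> conv (filter_cap F H) x) /\
  (forall (F F' : set (set G)) (x : G), is_filter F -> is_filter F' ->
      (forall A, F A -> F' A) -> conv F x -> conv F' x) /\
  (forall (F H : set (set G)) (x y : G), is_filter F -> is_filter H ->
      conv F x -> conv H y -> conv (filter_sub F H) (gsub G x y)).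

Definition is_topology (X : Type) (T : set (set X)) : Prop :=
  T (fun _ => True) /\
  (forall A B, T A -> T B -> T (fun x => A x /\ B x)) /\
  (forall U : set (set X), (forall A, U A -> T A) ->
      T (fun x => exists A, U A /\ A x)).

Definition is_group_topology {G : AbGroup} (T : set (set G)) : Prop :=
  is_topology T /\
  forall (x y : G) (W : set G), T W -> W (gsub G x y) ->
    exists U V, T U /\ T V /\ U x /\ V y /\
      forall a b, U a -> V b -> W (gsub G a b).

Definition top_conv {G : AbGroup} (T : set (set G)) : convergence G :=
  fun F x => is_filter F /\ forall U, T U -> U x -> F U.

(** The circle group T = R/Z, represented via real representatives:
    [near0 eps t] means the class of t lies within distance eps of 0 in R/Z. *)
Definition near0 (eps t : R) : Prop := exists k : Z, Rabs (t - IZR k) < eps.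

Definition in_Tplus (t : R) : Prop := exists k : Z, Rabs (t - IZR k) <= / 4.

(** A homomorphism G -> R/Z, given by a real-valued representative. *)
Definition is_hom_T {G : AbGroup} (phi : G -> R) : Prop :=
  forall x y : G, exists k : Z, phi (gadd G x y) = phi x + phi y + IZR k.

Definition cont_T {G : AbGroup} (conv : convergence G) (phi : G -> R) : Prop :=
  forall (F : set (set G)) (x : G), is_filter F -> conv F x ->
    forall eps, 0 < eps ->
      exists A, F A /\ forall y, A y -> near0 eps (phi y - phi x).

Definition is_char {G : AbGroup} (conv : convergence G) (phi : G -> R) : Prop :=
  is_hom_T phi /\ cont_T conv phi.

(** Equicontinuity of a set M of characters: for every filter F -> 0, the
    filter generated by {phi(x) : phi in M, x in F}, F in F, converges to 0 in T. *)
Definition equicontinuous {G : AbGroup} (conv : convergence G)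
    (M : set (G -> R)) : Prop :=
  forall F : set (set G), is_filter F -> conv F (g0 G) ->
    forall eps, 0 < eps ->
      exists A, F A /\ forall phi x, M phi -> A x -> near0 eps (phi x).

Definition equicont_subset {G : AbGroup} (conv : convergence G)
    (M : set (G -> R)) : Prop :=
  (forall phi, M phi -> is_char conv phi) /\ equicontinuous conv M.

Definition quasi_convex {G : AbGroup} (T : set (set G)) (A : set G) : Prop :=
  forall x : G, ~ A x ->
    exists phi, is_char (top_conv T) phi /\
      (forall a, A a -> in_Tplus (phi a)) /\ ~ in_Tplus (phi x).

Definition loc_quasi_convex {G : AbGroup} (T : set (set G)) : Prop :=
  is_group_topology T /\
  forall U : set G, (exists O, T O /\ O (g0 G) /\ forall z, O z -> U z) ->
    exists V, quasi_convex T V /\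
      (exists O, T O /\ O (g0 G) /\ forall z, O z -> V z) /\
      (forall z, V z -> U z).

Definition coarser_than_conv {G : AbGroup} (conv : convergence G)
    (T : set (set G)) : Prop :=
  forall (F : set (set G)) (x : G), is_filter F -> conv F x -> top_conv T F x.

Definition is_lqc_modification {G : AbGroup} (conv : convergence G)
    (T : set (set G)) : Prop :=
  loc_quasi_convex T /\ coarser_than_conv conv T /\
  forall T' : set (set G), loc_quasi_convex T' -> coarser_than_conv conv T' ->
    forall U, T' U -> T U.

(** Every conv-convergent filter also converges in T, and
  continuity and equicontinuity are tested on convergent filters; hence
  T-equicontinuous sets of T-continuous characters are conv-equicontinuous
  sets of conv-continuous characters.

  Conversely, let H be a conv-equicontinuous set of characters and let T_H be
  the topology of uniform closeness on H, with basic neighbourhoods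
  { y | for all phi in H, phi y - phi x lies within eps of Z }.  T_H is a
  group topology; it is coarser than conv by equicontinuity of H; and it is
  locally quasi-convex, because the polar of { n phi | phi in H, 1 <= n <= N }
  is quasi-convex, contains the T_H-ball of radius 1/(4N) around 0, and lies
  in the T_H-ball of radius e whenever 4 N e > 1.  By maximality of T, T_H is
  coarser than T, and H is plainly equicontinuous for T_H, hence for T. *)

From Stdlib Require Import Reals Lra Lia ZArith Classical.
Open Scope R_scope.

(** ** Distance to zero in the circle group R/Z *)

Lemma near0_add a b s t : near0 a s -> near0 b t -> near0 (a + b) (s + t).
Proof.
  intros [k1 H1] [k2 H2]. exists (k1 + k2)%Z. rewrite plus_IZR. split_Rabs; lra.
Qed.

Lemma near0_opp a s : near0 a s -> near0 a (- s).
Proof. intros [k H1]. exists (- k)%Z. rewrite opp_IZR. split_Rabs; lra. Qed.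

Lemma near0_mono a b s : a <= b -> near0 a s -> near0 b s.
Proof. intros Hab [k H1]. exists k. lra. Qed.

Lemma near0_modZ a s t : near0 a s -> (exists k, t = s + IZR k) -> near0 a t.
Proof.
  intros [k1 H1] [k Hk]. exists (k1 + k)%Z. rewrite plus_IZR. subst t.
  split_Rabs; lra.
Qed.

Lemma near0_zero a : 0 < a -> near0 a 0.
Proof. intros. exists 0%Z. simpl. split_Rabs; lra. Qed.

Lemma near0_scale n e t : (1 <= n)%nat -> near0 (e / INR n) t -> near0 e (INR n * t).
Proof.
  intros Hn [k Hk]. exists (Z.of_nat n * k)%Z. rewrite mult_IZR, <- INR_IZR_INZ.
  assert (Hpos : 1 <= INR n) by (apply (le_INR 1); auto).
  replace (INR n * t - INR n * IZR k) with (INR n * (t - IZR k)) by ring.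
  rewrite Rabs_mult, Rabs_pos_eq by lra.
  apply Rmult_lt_compat_l with (r := INR n) in Hk; [|lra].
  replace (INR n * (e / INR n)) with e in Hk by (field; lra). exact Hk.
Qed.

Lemma Tplus_small_multiples t N n :
  (1 <= N)%nat -> (n <= N)%nat -> near0 (/ (4 * INR N)) t -> in_Tplus (INR n * t).
Proof.
  intros HN Hn [k Hk]. exists (Z.of_nat n * k)%Z.
  rewrite mult_IZR, <- INR_IZR_INZ.
  assert (HN1 : 1 <= INR N) by (apply (le_INR 1); auto).
  assert (Hnn : INR n <= INR N) by (apply le_INR; auto).
  assert (Hn0 : 0 <= INR n) by apply pos_INR.
  replace (INR n * t - INR n * IZR k) with (INR n * (t - IZR k)) by ring.
  rewrite Rabs_mult, (Rabs_pos_eq (INR n)) by lra.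
  assert (HNq : INR N * / (4 * INR N) = / 4) by (field; lra).
  assert (0 <= Rabs (t - IZR k)) by apply Rabs_pos.
  assert (INR n * Rabs (t - IZR k) <= INR N * / (4 * INR N)).
  { apply Rmult_le_compat; lra. }
  lra.
Qed.

Lemma IZR_small z : Rabs (IZR z) < 1 -> z = 0%Z.
Proof.
  intros Hz. destruct (Z.lt_trichotomy z 0) as [h|[h|h]]; auto.
  - assert (IZR z <= -1) by (apply (IZR_le z (-1)); lia). split_Rabs; lra.
  - assert (1 <= IZR z) by (apply IZR_le; lia). split_Rabs; lra.
Qed.

(** By induction on N: if k is within
    1/(4N) of t, then (N+1) k is within 1/2 of (N+1) t, so it is the integer
    within 1/4 of (N+1) t, which bounds the error of k by 1/(4(N+1)). *)
Lemma Tplus_multiples_small t N : (1 <= N)%nat ->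
  (forall n, (1 <= n <= N)%nat -> in_Tplus (INR n * t)) ->
  exists k, Rabs (t - IZR k) * (4 * INR N) <= 1.
Proof.
  intros HN. induction N as [|N IH]; [lia|]. intros Hall.
  destruct (Nat.eq_dec N 0) as [->|HN0].
  { destruct (Hall 1%nat ltac:(lia)) as [k Hk]. exists k. simpl in *.
    replace (1 * t) with t in Hk by ring. lra. }
  destruct IH as [k Hk]; [lia | intros n Hn; apply Hall; lia |].
  destruct (Hall (S N) ltac:(lia)) as [l Hl].
  assert (HN1 : 1 <= INR N) by (apply (le_INR 1); lia).
  rewrite S_INR in *.
  set (a := Rabs (t - IZR k)) in *.
  assert (Ha : (INR N + 1) * a <= 1 / 2).
  { assert (0 <= a) by apply Rabs_pos. nra. }
  assert (Hlk : IZR l = (INR N + 1) * IZR k).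
  { set (m := (Z.of_nat (S N) * k - l)%Z).
    assert (Hm : IZR m = (INR N + 1) * IZR k - IZR l).
    { unfold m. rewrite minus_IZR, mult_IZR, <- INR_IZR_INZ, S_INR. ring. }
    assert (Hm0 : m = 0%Z).
    { apply IZR_small. rewrite Hm.
      replace ((INR N + 1) * IZR k - IZR l) with
        (((INR N + 1) * t - IZR l) - (INR N + 1) * (t - IZR k)) by ring.
      eapply Rle_lt_trans; [apply Rabs_triang|]. rewrite Rabs_Ropp, Rabs_mult.
      rewrite (Rabs_pos_eq (INR N + 1)) by lra. fold a. lra. }
    rewrite Hm0 in Hm. simpl in Hm. lra. }
  exists k. rewrite Hlk in Hl.
  replace ((INR N + 1) * t - (INR N + 1) * IZR k)
    with ((INR N + 1) * (t - IZR k)) in Hl by ring.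
  rewrite Rabs_mult, (Rabs_pos_eq (INR N + 1)) in Hl by lra. fold a in Hl. fold a. lra.
Qed.

Lemma gsub_add (G : AbGroup) (a b : G) : gadd G (gsub G a b) b = a.
Proof. unfold gsub. rewrite <- gaddA, (gaddN G b), gaddC. apply gadd0. Qed.

Lemma gsub_self (G : AbGroup) (x : G) : gsub G x x = g0 G.
Proof. unfold gsub. rewrite gaddC. apply gaddN. Qed.

Lemma hom_sub (G : AbGroup) (phi : G -> R) : is_hom_T phi ->
  forall a b, exists k, phi (gsub G a b) = phi a - phi b + IZR k.
Proof.
  intros Hh a b. destruct (Hh (gsub G a b) b) as [k Hk].
  rewrite gsub_add in Hk. exists (- k)%Z. rewrite opp_IZR. lra.
Qed.

(** A homomorphism into R/Z sends 0 to an integer, so phi z - phi 0 and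
    phi z have the same class in R/Z. *)
Lemma hom_near0_at0 (G : AbGroup) (phi : G -> R) e z : is_hom_T phi ->
  near0 e (phi z - phi (g0 G)) <-> near0 e (phi z).
Proof.
  intros Hh. destruct (Hh (g0 G) (g0 G)) as [k Hk]. rewrite gadd0 in Hk.
  split; intros Hn; apply (near0_modZ _ _ _ Hn).
  - exists (- k)%Z. rewrite opp_IZR. lra.
  - exists k. lra.
Qed.

Lemma point_is_filter (X : Type) (x : X) : is_filter (point_filter x).
Proof. unfold point_filter. repeat split; auto. Qed.

Lemma filter_nonempty (X : Type) (F : set (set X)) A :
  is_filter F -> F A -> exists a, A a.
Proof.
  intros [_ [Hf [_ Hup]]] HA. apply NNPP. intro Hn. apply Hf.
  apply (Hup A); auto. intros a Ha. apply Hn. eauto.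
Qed.

Lemma filter_sub_filter (G : AbGroup) (F H : set (set G)) :
  is_filter F -> is_filter H -> is_filter (filter_sub F H).
Proof.
  intros HF HH. pose proof HF as [FT [_ [FI _]]]. pose proof HH as [HT [_ [HI _]]].
  split; [|split; [|split]].
  - exists (fun _ => True), (fun _ => True). auto.
  - intros [A [B [FA [HB Hab]]]].
    destruct (filter_nonempty _ _ _ HF FA) as [a Ha].
    destruct (filter_nonempty _ _ _ HH HB) as [b Hb]. exact (Hab a b Ha Hb).
  - intros C D [A [B [FA [HB HC]]]] [A' [B' [FA' [HB' HD]]]].
    exists (fun x => A x /\ A' x), (fun x => B x /\ B' x).
    split; [apply FI; auto | split; [apply HI; auto |]].
    intros a b [] []; split; auto.
  - intros C D HCD [A [B [FA [HB HC]]]]. exists A, B. auto.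
Qed.

(** ** Equicontinuity is antitone in the convergence structure *)

Definition conv_le {G : AbGroup} (c1 c2 : convergence G) : Prop :=
  forall (F : set (set G)) (x : G), is_filter F -> c1 F x -> c2 F x.

(** Continuity and equicontinuity are tested on convergent filters, so they
    pass from the coarser structure c2 to the finer structure c1. *)
Lemma equicont_subset_antitone (G : AbGroup) (c1 c2 : convergence G)
  (H : set (G -> R)) :
  conv_le c1 c2 -> equicont_subset c2 H -> equicont_subset c1 H.
Proof.
  intros Hle [Hc He]. split.
  - intros phi Hp. destruct (Hc _ Hp) as [Hh Hcont]. split; auto.
    intros F x HF Fx. apply Hcont; auto.
  - intros F HF F0. apply He; auto.
Qed.

Lemma top_conv_antitone (G : AbGroup) (T T' : set (set G)) :
  (forall U, T' U -> T U) -> conv_le (top_conv T) (top_conv T').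
Proof. intros Hsub F x _ [HF HFx]. split; auto. Qed.

(** ** The topology of uniform closeness on a set of characters *)

Section UniformTopology.

Variables (G : AbGroup) (H : set (G -> R)).

Definition unif_close (eps : R) (x y : G) : Prop :=
  forall phi, H phi -> near0 eps (phi y - phi x).

Definition unif_open : set (set G) :=
  fun U => forall x, U x -> exists eps, 0 < eps /\ forall y, unif_close eps x y -> U y.

Lemma unif_ball_open (x : G) eps : 0 < eps ->
  exists O, unif_open O /\ O x /\ forall y, O y -> unif_close eps x y.
Proof.
  intros He. exists (fun y => exists d, 0 < d /\ unif_close (eps - d) x y).
  split; [|split].
  - intros y [d [Hd Hy]]. exists (d / 2). split; [lra|]. intros z Hz.
    exists (d / 2). split; [lra|]. intros phi Hp.
    replace (phi z - phi x) with ((phi z - phi y) + (phi y - phi x)) by ring.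
    replace (eps - d / 2) with (d / 2 + (eps - d)) by lra.
    apply near0_add; auto.
  - exists (eps / 2). split; [lra|]. intros phi _.
    replace (phi x - phi x) with 0 by ring. apply near0_zero. lra.
  - intros y [d [Hd Hy]] phi Hp. eapply near0_mono; [|apply Hy; auto]. lra.
Qed.

Lemma unif_top_conv_close (F : set (set G)) x eps :
  top_conv unif_open F x -> 0 < eps ->
  exists A, F A /\ forall y, A y -> unif_close eps x y.
Proof.
  intros [_ HF] He. destruct (unif_ball_open x eps He) as [O [HO [Ox HOb]]].
  exists O. auto.
Qed.

Lemma unif_open_topology : is_topology unif_open.
Proof.
  split; [|split].
  - intros x _. exists 1. split; [lra|]. auto.
  - intros A B HA HB x [Ax Bx].
    destruct (HA x Ax) as [e1 [He1 H1]]. destruct (HB x Bx) as [e2 [He2 H2]].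
    exists (Rmin e1 e2). split; [apply Rmin_glb_lt; auto|].
    intros y Hy. split; [apply H1 | apply H2]; intros phi Hp;
      eapply near0_mono; try apply Hy; auto; [apply Rmin_l | apply Rmin_r].
  - intros U HU x [A [UA Ax]]. destruct (HU A UA x Ax) as [e [He HA]].
    exists e. split; auto. intros y Hy. exists A. split; auto.
Qed.

Hypothesis H_hom : forall phi, H phi -> is_hom_T phi.

(** Subtraction is uniformly continuous: (eps/2)-closeness of a to x and of
    b to y gives eps-closeness of a - b to x - y. *)
Lemma unif_open_group : is_group_topology unif_open.
Proof.
  split; [apply unif_open_topology|].
  intros x y W HW Wxy. destruct (HW _ Wxy) as [e [He HB]].
  destruct (unif_ball_open x (e / 2)) as [U [HU [Ux HUb]]]; [lra|].
  destruct (unif_ball_open y (e / 2)) as [V [HV [Vy HVb]]]; [lra|].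
  exists U, V. repeat split; auto.
  intros a b Ua Vb. apply HB. intros phi Hp.
  destruct (hom_sub _ _ (H_hom _ Hp) a b) as [k1 E1].
  destruct (hom_sub _ _ (H_hom _ Hp) x y) as [k2 E2].
  rewrite E1, E2.
  apply near0_modZ with (s := (phi a - phi x) + - (phi b - phi y)).
  - replace e with (e / 2 + e / 2) by lra. apply near0_add; [|apply near0_opp].
    + apply HUb; auto.
    + apply HVb; auto.
  - exists (k1 - k2)%Z. rewrite minus_IZR. ring.
Qed.

Lemma unif_open_equicont : equicont_subset (top_conv unif_open) H.
Proof.
  split.
  - intros phi Hp. split; [auto|]. intros F x HF Fx eps Heps.
    destruct (unif_top_conv_close F x eps Fx Heps) as [A [FA HA]].
    exists A. split; auto. intros y Ay. apply HA; auto.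
  - intros F HF F0 eps Heps.
    destruct (unif_top_conv_close F _ eps F0 Heps) as [A [FA HA]].
    exists A. split; auto. intros phi y Hp Ay.
    apply (hom_near0_at0 _ _ _ _ (H_hom _ Hp)). apply HA; auto.
Qed.

(** If H is conv-equicontinuous, then the uniform topology is coarser than
    conv: for F -> x, the filter F - x converges to 0, and equicontinuity at
    0 yields a member of F that is uniformly close to x. *)
Lemma unif_open_coarser (conv : convergence G) :
  is_convergence_group conv -> equicontinuous conv H ->
  coarser_than_conv conv unif_open.
Proof.
  intros [Hpt [_ [_ Hsub]]] He F x HF Fx. split; auto. intros U HU Ux.
  destruct (HU x Ux) as [e [Hep HB]].
  pose proof (Hsub F (point_filter x) x x HF (point_is_filter _ x) Fx (Hpt x)) as Hs.
  rewrite gsub_self in Hs.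
  destruct (He _ (filter_sub_filter _ _ _ HF (point_is_filter _ x)) Hs e Hep)
    as [A [[A' [B' [FA' [Bx HA]]]] HAe]].
  destruct HF as [_ [_ [_ Hup]]]. apply (Hup A'); auto.
  intros a Ha. apply HB. intros phi Hp.
  destruct (hom_sub _ _ (H_hom _ Hp) a x) as [k Hk].
  apply near0_modZ with (s := phi (gsub G a x)).
  - apply HAe; auto.
  - exists (- k)%Z. rewrite opp_IZR, Hk. ring.
Qed.

Lemma unif_open_multiple_char phi n : H phi -> (1 <= n)%nat ->
  is_char (top_conv unif_open) (fun x => INR n * phi x).
Proof.
  intros Hp Hn. assert (Hn1 : 1 <= INR n) by (apply (le_INR 1); auto). split.
  - intros x y. destruct (H_hom _ Hp x y) as [k Hk]. exists (Z.of_nat n * k)%Z.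
    rewrite Hk, mult_IZR, <- INR_IZR_INZ. ring.
  - intros F x HF Fx eps He.
    destruct (unif_top_conv_close F x (eps / INR n) Fx) as [A [FA HA]].
    { apply Rdiv_lt_0_compat; lra. }
    exists A. split; auto. intros y Ay.
    replace (INR n * phi y - INR n * phi x) with (INR n * (phi y - phi x)) by ring.
    apply near0_scale; auto. apply HA; auto.
Qed.

Definition multiples_upto (N : nat) : set (G -> R) :=
  fun psi => exists phi n, H phi /\ (1 <= n <= N)%nat /\ psi = (fun x => INR n * phi x).

Definition polar_upto (N : nat) : set G :=
  fun z => forall psi, multiples_upto N psi -> in_Tplus (psi z).

Lemma polar_upto_nbhd N : (1 <= N)%nat ->
  exists O, unif_open O /\ O (g0 G) /\ forall z, O z -> polar_upto N z.
Proof.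
  intros HN. assert (HN1 : 1 <= INR N) by (apply (le_INR 1); auto).
  destruct (unif_ball_open (g0 G) (/ (4 * INR N))) as [O [HO [O0 HOb]]].
  { apply Rinv_0_lt_compat; lra. }
  exists O. split; [auto | split; auto]. intros z Oz psi [phi [n [Hp [Hn ->]]]].
  apply (Tplus_small_multiples _ N); [auto | lia |].
  apply (hom_near0_at0 _ _ _ _ (H_hom _ Hp)). apply HOb; auto.
Qed.

Lemma polar_upto_small N e : (1 <= N)%nat -> 1 < 4 * INR N * e ->
  forall z, polar_upto N z -> unif_close e (g0 G) z.
Proof.
  intros HN He z Pz phi Hp. apply (hom_near0_at0 _ _ _ _ (H_hom _ Hp)).
  destruct (Tplus_multiples_small (phi z) N HN) as [k Hk].
  { intros n Hn. apply (Pz (fun x => INR n * phi x)). exists phi, n. auto. }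
  assert (HN1 : 1 <= INR N) by (apply (le_INR 1); auto).
  exists k. assert (0 <= Rabs (phi z - IZR k)) by apply Rabs_pos. nra.
Qed.

End UniformTopology.

Lemma polar_quasi_convex (G : AbGroup) (T : set (set G)) (S : set (G -> R)) :
  (forall psi, S psi -> is_char (top_conv T) psi) ->
  quasi_convex T (fun z => forall psi, S psi -> in_Tplus (psi z)).
Proof.
  intros HS x Hx. apply not_all_ex_not in Hx as [psi Hpsi].
  apply imply_to_and in Hpsi as [Spsi Hnot].
  exists psi. split; [auto | split; auto].
Qed.

(** The uniform topology of a set of homomorphisms is locally quasi-convex:
    inside a uniform e-ball around 0 we find the quasi-convex polar of the
    first N multiples of H, for 4 N e > 1. *)
Lemma unif_open_lqc (G : AbGroup) (H : set (G -> R)) :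
  (forall phi, H phi -> is_hom_T phi) -> loc_quasi_convex (unif_open G H).
Proof.
  intros Hh. split; [apply unif_open_group; auto|].
  intros U [O [HO [O0 HOU]]]. destruct (HO _ O0) as [e [He Hb]].
  destruct (INR_unbounded (/ (4 * e))) as [N HN].
  assert (H4N : 1 < 4 * INR N * e).
  { apply Rmult_lt_compat_l with (r := 4 * e) in HN; [|lra].
    rewrite Rinv_r in HN by lra. lra. }
  assert (HN1 : (1 <= N)%nat).
  { destruct N; [simpl in H4N; lra | lia]. }
  exists (polar_upto G H N). split; [|split].
  - apply polar_quasi_convex. intros psi [phi [n [Hp [Hn ->]]]].
    apply unif_open_multiple_char; auto; lia.
  - apply polar_upto_nbhd; auto.
  - intros z Pz. apply HOU, Hb. apply (polar_upto_small G H Hh N); auto.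
Qed.

Theorem proposition2p11 (G : AbGroup) (conv : convergence G)
  (Hconv : is_convergence_group conv)
  (T : set (set G)) (HT : is_lqc_modification conv T)
  (H : set (G -> R)) :
  equicont_subset conv H <-> equicont_subset (top_conv T) H.
Proof.
  destruct HT as [_ [Hcoarser Hfinest]]. split.
  - intros [Hchar Hequi].
    assert (Hhom : forall phi, H phi -> is_hom_T phi) by (intros; apply Hchar; auto).
    (* By maximality of T, the uniform topology of H is coarser than T. *)
    assert (HTH : forall U, unif_open G H U -> T U).
    { apply Hfinest.
      - apply unif_open_lqc; auto.
      - apply unif_open_coarser; auto. }
    apply (equicont_subset_antitone _ _ (top_conv (unif_open G H))).
    + apply top_conv_antitone; auto.
    + apply unif_open_equicont; auto.
  - apply equicont_subset_antitone. exact Hcoarser.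
Qed.
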